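(* Let $(F,t)\in U$, $Y=Y_{F,t}$, and $p_1,p_2\in C_i$ ($i\in\{1,2\}$). Let $l_{p_1p_2}$ be the residual line of $\overline{p_0p_1}+\overline{p_0p_2}$, i.e. the line with $Y\cap P=\overline{p_0p_1}+\overline{p_0p_2}+l_{p_1p_2}$, where $P$ is the plane spanned by $p_0,p_1,p_2$ (when $p_1=p_2$, $P$ is the tangent plane of the cone $\hat C_i$ along $\overline{p_0p_1}$). Then $l_{p_1p_2}=\overline{p_0p_3}$, where $p_3$ is the third intersection point of the line $\overline{p_1p_2}$ with $C_i$. In particular $l_{p_1p_2}\in\Gamma_i$.
   Context: $U=U_0\times\mathbb{A}^1$, where $U_0$ is the space of cubic forms $F(x_0,\dots,x_3)$ such that the curve cut out by $F$ on the quadric $x_0x_3=x_1x_2$ in $\mathbb{P}^3$ is smooth, avoids $[0,0,0,1]$, and is tangent with multiplicity $2$ to the lines $x_0=x_1=0$ and $x_0=x_2=0$. $Y_{F,t}\subset\mathbb{P}^5$ is $x_4^3-F(x_0,\dots,x_3)+x_5(x_0x_3-x_1x_2)+t\,x_0x_5^2=0$. $p_0=[0,\dots,0,1]$. $C_i=(x_0=x_i=x_5=0)\cap(x_4^3=F)$ is a plane cubic, $\hat C_i\subset Y$ the cone over $C_i$ with vertex $p_0$, and $\Gamma_i\subset F(Y)$ the image of $C_i\to F(Y)$, $p\mapsto\overline{p_0p}$. *)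

From HB Require Import structures.
From mathcomp Require Import all_boot all_order all_algebra.
From mathcomp Require Import mpoly.
Set Implicit Arguments. Unset Strict Implicit. Unset Printing Implicit Defensive.
Import Order.TTheory GRing.Theory.
Local Open Scope ring_scope.

Section Defs.
Variable k : closedFieldType.

(* homogeneous coordinates x_0,...,x_5 of P^5 (resp. x_0..x_3 of P^3) *)
Definition vec := 'I_6 -> k.
Definition o6 (n : nat) : 'I_6 := inord n.
Definition vec4 (a b c d : k) : 'I_4 -> k := fun j => nth 0 [:: a; b; c; d] j.
Definition restr4 (x : vec) : 'I_4 -> k := fun j => x (widen_ord (isT : (4 <= 6)%N) j).

Definition Qd (x : 'I_4 -> k) : k := x 0 * x 3 - x 1 * x 2.
Definition gradQ (x : 'I_4 -> k) : 'I_4 -> k :=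
  fun j => nth 0 [:: x 3; - x 2; - x 1; x 0] j.
Definition gradF (F : {mpoly k[4]}) (x : 'I_4 -> k) : 'I_4 -> k :=
  fun j => (mderiv j F).@[x].

(* the curve Q = F = 0 in P^3 is smooth (Jacobian criterion for the
   complete intersection) *)
Definition smooth_on_quadric (F : {mpoly k[4]}) : Prop :=
  forall x : 'I_4 -> k, (exists j, x j != 0) -> Qd x = 0 -> F.@[x] = 0 ->
    forall a b : k, (forall j, a * gradQ x j + b * gradF F x j = 0) ->
      a = 0 /\ b = 0.

Definition double_root (f : k -> k -> k) : Prop :=
  exists l1 l2 m1 m2 : k, l1 * m2 - l2 * m1 != 0 /\
    forall a b, f a b = (l1 * a + l2 * b) ^+ 2 * (m1 * a + m2 * b).

Definition U0 (F : {mpoly k[4]}) : Prop :=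
  [/\ F \is 3.-homog,
      smooth_on_quadric F,
      F.@[vec4 0 0 0 1] != 0,
      (* tangent with multiplicity 2 to the line x0 = x1 = 0 *)
      double_root (fun a b => F.@[vec4 0 0 a b])
    & (* tangent with multiplicity 2 to the line x0 = x2 = 0 *)
      double_root (fun a b => F.@[vec4 0 a 0 b])].

Definition Phi (F : {mpoly k[4]}) (t : k) (x : vec) : k :=
  x (o6 4) ^+ 3 - F.@[restr4 x]
  + x (o6 5) * (x (o6 0) * x (o6 3) - x (o6 1) * x (o6 2))
  + t * x (o6 0) * x (o6 5) ^+ 2.

(* x_4^3 - F: equation of C_i in the plane x0 = xi = x5 = 0, and of the
   cone \hat C_i in the 3-space x0 = xi = 0 *)
Definition gcone (F : {mpoly k[4]}) (x : vec) : k :=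
  x (o6 4) ^+ 3 - F.@[restr4 x].

Definition grad_g (F : {mpoly k[4]}) (x : vec) : vec :=
  fun j => if (val j < 4)%N then - (mderiv (@inord 3 j) F).@[restr4 x]
           else if val j == 4%N then 3%:R * x (o6 4) ^+ 2 else 0.

Definition p0 : vec := fun j => if val j == 5%N then 1 else 0.

Definition lf (a x : vec) : k := \sum_j a j * x j.
Definition nonzero (p : vec) : Prop := exists j, p j != 0.
Definition proj_eq (p q : vec) : Prop :=
  exists c : k, c != 0 /\ forall j, q j = c * p j.
Definition indep2 (q q' : vec) : Prop :=
  forall a b : k, (forall j, a * q j + b * q' j = 0) -> a = 0 /\ b = 0.
Definition span1 (a : vec) : vec -> Prop :=
  fun x => exists s, forall j, x j = s * a j.
Definition span2 (a b : vec) : vec -> Prop :=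
  fun x => exists s u, forall j, x j = s * a j + u * b j.
Definition span3 (a b c : vec) : vec -> Prop :=
  fun x => exists s u v, forall j, x j = s * a j + u * b j + v * c j.

Definition divcomp (S Z : vec -> Prop) (l : vec) : Prop :=
  (forall x, Z x -> S x /\ lf l x = 0) /\ (exists x, S x /\ lf l x != 0).

(* the divisor cut by the cubic form g on (the projectivisation of) the
   linear subspace S is Z1 + Z2 + Z3 (each Z_m a hyperplane of S) *)
Definition cuts3 (g : vec -> k) (S Z1 Z2 Z3 : vec -> Prop) : Prop :=
  exists l1 l2 l3 : vec,
    [/\ forall x, S x -> g x = lf l1 x * lf l2 x * lf l3 x,
        divcomp S Z1 l1, divcomp S Z2 l2 & divcomp S Z3 l3].

Definition Cpt (F : {mpoly k[4]}) (i : 'I_6) (p : vec) : Prop :=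
  [/\ nonzero p, p (o6 0) = 0, p i = 0, p (o6 5) = 0 & gcone F p = 0].

(* tangent plane of the cone \hat C_i (in the 3-space x0 = xi = 0)
   along the line p0 p1 *)
Definition tangent_plane F (i : 'I_6) (p1 : vec) : vec -> Prop :=
  fun x => [/\ x (o6 0) = 0, x i = 0 & lf (grad_g F p1) x = 0].
Definition tangent_line F (i : 'I_6) (p1 : vec) : vec -> Prop :=
  fun x => [/\ x (o6 0) = 0, x i = 0, x (o6 5) = 0 & lf (grad_g F p1) x = 0].

Definition planeP F i (p1 p2 : vec) : vec -> Prop :=
  fun x => (proj_eq p1 p2 -> tangent_plane F i p1 x) /\
           (~ proj_eq p1 p2 -> span3 p0 p1 p2 x).
Definition lineL F i (p1 p2 : vec) : vec -> Prop :=
  fun x => (proj_eq p1 p2 -> tangent_line F i p1 x) /\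
           (~ proj_eq p1 p2 -> span2 p1 p2 x).

Definition third_point F i (p1 p2 p3 : vec) : Prop :=
  nonzero p3 /\ cuts3 (gcone F) (lineL F i p1 p2) (span1 p1) (span1 p2) (span1 p3).

Definition residual_line F t i (p1 p2 q q' : vec) : Prop :=
  indep2 q q' /\
  cuts3 (Phi F t) (planeP F i p1 p2) (span2 p0 p1) (span2 p0 p2) (span2 q q').

End Defs.

From HB Require Import structures.
From mathcomp Require Import all_boot all_order all_algebra.
From mathcomp Require Import mpoly.
From mathcomp Require Import ring.
From Stdlib Require Import FunctionalExtensionality Classical.
Import GRing.Theory.
Local Open Scope ring_scope.
Set Implicit Arguments. Unset Strict Implicit. Unset Printing Implicit Defensive.

(* On the 3-space x0 = xi = 0 the equation of Y reduces to the cone equation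
   x4^3 - F, which does not involve x5.  Hence every plane P through p0 inside
   this 3-space meets Y in the cone, with vertex p0, over the divisor cut by
   the plane cubic C_i on the line L = P /\ {x5 = 0}.  In a basis (p1, b) of L
   with dual coordinates (u, v), the cubic restricted to L is
   v * (u or v) * (al u + be v), the middle factor being v exactly when
   p1 = p2 (tangency); so the divisor is p1 + p2 + p3 with p3 = be p1 - al b,
   and Y /\ P = p0p1 + p0p2 + p0p3.  Conversely, if Y /\ P = m1 m2 m3 with
   m1, m2 vanishing on p0p1, p0p2, cancelling the quadratic factor shows that
   m3 is proportional to al u + be v, whose zero set in P is the line p0p3.
   That (al, be) <> 0, i.e. that L is not contained in C_i, comes from the
   double tangency: on x0 = xi = 0 the form F is l^2 m with l, m independent,
   and x4^3 = l^2 m cannot hold along a line. *)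

Lemma double_root_form_not_cube (R : idomainType) (l1 l2 m1 m2 e1 e2 : R) :
  l1 * m2 - l2 * m1 != 0 ->
  ~ (forall u v, (e1 * u + e2 * v) ^+ 3 = (l1 * u + l2 * v) ^+ 2 * (m1 * u + m2 * v)).
Proof.
move=> hD h.
have cube0 (u v : R) : l1 * u + l2 * v = 0 \/ m1 * u + m2 * v = 0 -> e1 * u + e2 * v = 0.
  move=> h0; have : (e1 * u + e2 * v) ^+ 3 == 0.
    by rewrite h; case: h0 => ->; rewrite ?expr2 ?(mul0r, mulr0).
  by rewrite expf_eq0 => /eqP.
have e_l : e1 * l2 - e2 * l1 = 0.
  by rewrite -mulrN cube0 //; left; ring.
have e_m : e1 * m2 - e2 * m1 = 0.
  by rewrite -mulrN cube0 //; right; ring.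
have e0 (e : R) : e * (l1 * m2 - l2 * m1) = 0 -> e = 0.
  by move/eqP; rewrite mulf_eq0 (negbTE hD) orbF => /eqP.
have e10 : e1 = 0.
  apply: e0; transitivity (l1 * (e1 * m2 - e2 * m1) - m1 * (e1 * l2 - e2 * l1)).
    by ring.
  by rewrite e_l e_m; ring.
have e20 : e2 = 0.
  apply: e0; transitivity (l2 * (e1 * m2 - e2 * m1) - m2 * (e1 * l2 - e2 * l1)).
    by ring.
  by rewrite e_l e_m; ring.
have : (l1 * m2 - l2 * m1) ^+ 3 = 0.
  transitivity (- ((l1 * (l2 + m2) + l2 * - (l1 + m1)) ^+ 2 *
                   (m1 * (l2 + m2) + m2 * - (l1 + m1)))); first by ring.
  by rewrite -h e10 e20; ring.
by move/eqP; rewrite expf_eq0 /= (negbTE hD).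
Qed.

Lemma common_zero2 (R : fieldType) (l1 l2 m1 m2 : R) : l1 * m2 - l2 * m1 = 0 ->
  exists u v, [/\ u != 0 \/ v != 0, l1 * u + l2 * v = 0 & m1 * u + m2 * v = 0].
Proof.
move=> hD.
have [l0|ln] := eqVneq (l1, l2) (0, 0).
  case: l0 => -> ->; have [m0|mn] := eqVneq (m1, m2) (0, 0).
    by case: m0 => -> ->; exists 1, 0; split; [left; exact: oner_neq0 | ring | ring].
  exists m2, (- m1); split; [|ring|ring].
  by apply/orP; rewrite oppr_eq0 orbC -negb_and; apply: contra mn => /andP[/eqP-> /eqP->].
exists l2, (- l1); split; [|ring|by rewrite -[RHS]oppr0 -hD; ring].
by apply/orP; rewrite oppr_eq0 orbC -negb_and; apply: contra ln => /andP[/eqP-> /eqP->].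
Qed.

Lemma cancel_quadratic_factor (R : idomainType) (w : bool) (g0 ga gb al be : R) :
  2%:R != 0 :> R ->
  (forall s u v, v * (if w then v else u) * (s * g0 + u * ga + v * gb) =
                 v * (if w then v else u) * (al * u + be * v)) ->
  [/\ g0 = 0, ga = al & gb = be].
Proof.
move=> two_neq0 h.
have h011 : ga + gb = al + be.
  have := h 0 1 1; rewrite if_same => e.
  by transitivity (1 * 1 * (0 * g0 + 1 * ga + 1 * gb)); [ring | rewrite e; ring].
have h111 : g0 + ga + gb = al + be.
  have := h 1 1 1; rewrite if_same => e.
  by transitivity (1 * 1 * (1 * g0 + 1 * ga + 1 * gb)); [ring | rewrite e; ring].
have h012 : ga + 2%:R * gb = al + 2%:R * be.
  have c_neq0 : 2%:R * (if w then 2%:R else 1) != 0 :> R.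
    by rewrite mulf_neq0 //; case: (w); rewrite ?oner_neq0.
  (* [ring] does not accept if-expressions, so the factor is generalized. *)
  move: c_neq0 (h 0 1 2%:R); move: (if w then _ else _) => c c_neq0 e.
  apply: (mulfI c_neq0).
  by transitivity (2%:R * c * (0 * g0 + 1 * ga + 2%:R * gb)); [ring | rewrite e; ring].
have gbe : gb = be.
  by transitivity ((ga + 2%:R * gb) - (ga + gb)); [ring | rewrite h012 h011; ring].
split; last exact: gbe.
  by transitivity ((g0 + ga + gb) - (ga + gb)); [ring | rewrite h111 h011; ring].
by transitivity ((ga + gb) - gb); [ring | rewrite h011 gbe; ring].
Qed.

Section Polarization.
Variables (R : comRingType) (n : nat).
Implicit Types (p q : {mpoly R[n]}) (a b : 'I_n -> R).

Definition mdirderiv p a b : R := \sum_j b j * (mderiv j p).@[a].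

Lemma mdirderiv0 a b : mdirderiv 0 a b = 0.
Proof. by rewrite /mdirderiv big1 // => j _; rewrite mderiv0 meval0 mulr0. Qed.

Lemma mdirderivD p q a b : mdirderiv (p + q) a b = mdirderiv p a b + mdirderiv q a b.
Proof.
by rewrite /mdirderiv -big_split; apply: eq_bigr => j _; rewrite mderivD mevalD mulrDr.
Qed.

Lemma mdirderivZ c p a b : mdirderiv (c *: p) a b = c * mdirderiv p a b.
Proof.
by rewrite /mdirderiv mulr_sumr; apply: eq_bigr => j _; rewrite mderivZ mevalZ mulrCA.
Qed.

Lemma mdirderivM p q a b :
  mdirderiv (p * q) a b = mdirderiv p a b * q.@[a] + p.@[a] * mdirderiv q a b.
Proof.
rewrite /mdirderiv mulr_suml mulr_sumr -big_split; apply: eq_bigr => j _.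
by rewrite mderivM mevalD !mevalM mulrDr mulrA [b j * (p.@[a] * _)]mulrCA.
Qed.

Lemma mdirderivX i a b : mdirderiv 'X_i a b = b i.
Proof.
rewrite /mdirderiv (bigD1 i) //= big1 => [|j /negbTE ji].
  rewrite mderivX mnm1E eqxx.
  have -> : (U_(i) - U_(i))%MM = 0%MM by apply/mnmP => r; rewrite mnmBE subnn mnm0E.
  by rewrite mpolyX0 scale1r meval1 mulr1 addr0.
by rewrite mderivX mnm1E eq_sym ji scale0r meval0 mulr0.
Qed.

Lemma mpolyX_mdeg3 (m : 'X_{1..n}) : mdeg m = 3%N ->
  exists i j l, 'X_[m] = 'X_i * 'X_j * 'X_l :> {mpoly R[n]}.
Proof.
move=> hm; have := size_m2s m; rewrite hm.
have := s2mK m.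
case: (m2s m) => [|i [|j [|l [|? ?]]]] //= hs _.
exists i, j, l; rewrite -!mpolyXD -hs; congr mpolyX.
by apply/mnmP => r; rewrite !mnmDE !mnm1E /s2m mnmE /= addn0 addnA.
Qed.

Lemma homog3_ind (P : {mpoly R[n]} -> Prop) :
  P 0 -> (forall p q, P p -> P q -> P (p + q)) -> (forall c p, P p -> P (c *: p)) ->
  (forall i j l, P ('X_i * 'X_j * 'X_l)) ->
  forall p, p \is 3.-homog -> P p.
Proof.
move=> P0 PD PZ PX p /dhomog_mf hm; rewrite (mpolyE p).
elim: (msupp p) hm => [|m s IH] hm; first by rewrite big_nil.
rewrite big_cons; apply: PD; last by apply: IH => m' hm'; apply: hm; rewrite inE hm' orbT.
by have [i [j [l ->]]] := mpolyX_mdeg3 (hm m (mem_head _ _)); apply: PZ.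
Qed.

Lemma meval_homog3_lin p a b u v : p \is 3.-homog ->
  p.@[fun j => u * a j + v * b j] =
  u ^+ 3 * p.@[a] + u ^+ 2 * v * mdirderiv p a b + u * v ^+ 2 * mdirderiv p b a
  + v ^+ 3 * p.@[b].
Proof.
move: p; apply: homog3_ind.
- by rewrite !meval0 !mdirderiv0; ring.
- by move=> p q hp hq; rewrite !mevalD !mdirderivD hp hq; ring.
- by move=> c p hp; rewrite !mevalZ !mdirderivZ hp; ring.
- by move=> i j l; rewrite !mdirderivM !mdirderivX !mevalM !mevalXU; ring.
Qed.

Lemma mdirderiv_homog3_self p a : p \is 3.-homog -> mdirderiv p a a = 3%:R * p.@[a].
Proof.
move: p; apply: homog3_ind.
- by rewrite meval0 mdirderiv0 mulr0.
- by move=> p q hp hq; rewrite mevalD mdirderivD hp hq mulrDr.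
- by move=> c p hp; rewrite mevalZ mdirderivZ hp mulrCA.
- by move=> i j l; rewrite !mdirderivM !mdirderivX !mevalM !mevalXU; ring.
Qed.

End Polarization.

Section Vectors.
Variable k : closedFieldType.
Implicit Types (a b c x y l p q : vec k) (u v s : k).

Definition lc u a v b : vec k := fun j => u * a j + v * b j.
Definition unitv (r : 'I_6) : vec k := fun j => if j == r then 1 else 0.

Lemma vec_ext x y : (forall j, x j = y j) -> x = y.
Proof. exact: functional_extensionality. Qed.

Lemma o6K n : (n < 6)%N -> val (o6 n) = n.
Proof. exact: inordK. Qed.

Lemma eq_o6 n m : (n < 6)%N -> (m < 6)%N -> (o6 n == o6 m) = (n == m).
Proof. by move=> hn hm; rewrite -val_eqE /= !o6K. Qed.

Lemma ord6_cases (j : 'I_6) :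
  j = o6 0 \/ j = o6 1 \/ j = o6 2 \/ j = o6 3 \/ j = o6 4 \/ j = o6 5.
Proof.
have E n (hn : (n < 6)%N) : Ordinal hn = o6 n by apply/val_inj; rewrite o6K.
by case: j => [[|[|[|[|[|[|?]]]]]] hj] //; rewrite E; do ?[by left | right].
Qed.

Lemma sum6 (f : 'I_6 -> k) :
  \sum_j f j = f (o6 0) + f (o6 1) + f (o6 2) + f (o6 3) + f (o6 4) + f (o6 5).
Proof.
rewrite !big_ord_recl big_ord0 addr0 !addrA.
by congr (_ + _ + _ + _ + _ + _); congr f; apply/val_inj; rewrite /= inordK.
Qed.

Lemma lfC a b : lf a b = lf b a.
Proof. by apply: eq_bigr => j _; rewrite mulrC. Qed.

Lemma lf_lc l u a v b : lf l (lc u a v b) = u * lf l a + v * lf l b.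
Proof.
rewrite /lf !mulr_sumr -big_split; apply: eq_bigr => j _ /=; rewrite /lc; ring.
Qed.

Lemma lf_lcl x u a v b : lf (lc u a v b) x = u * lf a x + v * lf b x.
Proof. by rewrite lfC lf_lc !(lfC x). Qed.

Lemma lfZl s a x : lf (fun j => s * a j) x = s * lf a x.
Proof. by rewrite /lf mulr_sumr; apply: eq_bigr => j _; rewrite mulrA. Qed.

Lemma lf_lc_eq0 l u a v b : (forall j, lc u a v b j = 0) -> u * lf l a + v * lf l b = 0.
Proof. by move=> h; rewrite -lf_lc /lf big1 // => j _; rewrite h mulr0. Qed.

Lemma lf_unitv l r : lf l (unitv r) = l r.
Proof.
rewrite /lf (bigD1 r) //= big1 => [|j /negbTE hj]; rewrite /unitv ?eqxx ?hj; ring.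
Qed.

Lemma lf_p0 l : lf l (p0 k) = l (o6 5).
Proof.
have -> : p0 k = unitv (o6 5) by apply: vec_ext => j; rewrite /p0 /unitv -val_eqE o6K.
exact: lf_unitv.
Qed.

Lemma dual_coords U V a b x s u :
  [/\ lf U a = 1, lf U b = 0, lf V a = 0 & lf V b = 1] ->
  (forall j, x j = s * a j + u * b j) -> x = lc (lf U x) a (lf V x) b.
Proof.
case=> U1 U2 V1 V2 hx; have -> : x = lc s a u b by apply: vec_ext.
by rewrite !lf_lc U1 U2 V1 V2; apply: vec_ext => j; rewrite /lc; ring.
Qed.

Lemma indep2_of_not_proj_eq p q : nonzero p -> nonzero q -> ~ proj_eq p q -> indep2 p q.
Proof.
move=> [j0 pj0] [j1 qj1] np u v h.
have [v0|vn] := eqVneq v 0.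
  split => //; move: (h j0); rewrite v0 mul0r addr0 => /eqP.
  by rewrite mulf_eq0 (negbTE pj0) orbF => /eqP.
have qE j : q j = (- u / v) * p j.
  apply: (mulfI vn); transitivity (u * p j + v * q j - u * p j); first by ring.
  by rewrite (h j); field.
exfalso; apply: np; exists (- u / v); split => //.
by apply: contra qj1 => /eqP c0; rewrite qE c0 mul0r.
Qed.

Lemma span2_eq q (q' : vec k) a b A1 B1 A2 B2 : indep2 q q' ->
  (forall j, q j = A1 * a j + B1 * b j) -> (forall j, q' j = A2 * a j + B2 * b j) ->
  forall x, span2 q q' x <-> span2 a b x.
Proof.
move=> hqq hq hq' x; split.
  case=> s [u hx]; exists (s * A1 + u * A2), (s * B1 + u * B2) => j.
  by rewrite hx hq hq'; ring.
have D_neq0 : A1 * B2 - A2 * B1 != 0.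
  apply/eqP => /common_zero2 [u [v [uv0 ea eb]]].
  have [u0 v0] : u = 0 /\ v = 0.
    apply: hqq => j; rewrite hq hq'.
    transitivity ((A1 * u + A2 * v) * a j + (B1 * u + B2 * v) * b j); first by ring.
    by rewrite ea eb; ring.
  by case: uv0; rewrite ?u0 ?v0 eqxx.
case=> s [u hx].
exists ((s * B2 - u * A2) / (A1 * B2 - A2 * B1)), ((u * A1 - s * B1) / (A1 * B2 - A2 * B1)).
move=> j.
by rewrite hx hq hq'; field.
Qed.

End Vectors.
Arguments unitv {k} r.

Section Projection.
Variable k : closedFieldType.
Implicit Types (x y l : vec k) (s : k).

Definition projp0 x : vec k := fun j => if j == o6 5 then 0 else x j.

Lemma p0E j : p0 k j = if j == o6 5 then 1 else 0.
Proof. by rewrite /p0 -val_eqE o6K. Qed.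

Lemma p0_decomp x : x = lc (x (o6 5)) (p0 k) 1 (projp0 x).
Proof. by apply: vec_ext => j; rewrite /projp0 /lc p0E; case: eqP => [->|_]; ring. Qed.

Lemma projp0_id x : x (o6 5) = 0 -> projp0 x = x.
Proof. by move=> h; apply: vec_ext => j; rewrite /projp0; case: eqP => // ->. Qed.

Lemma projp0_cone s y : y (o6 5) = 0 -> projp0 (lc s (p0 k) 1 y) = y.
Proof.
move=> h; apply: vec_ext => j; rewrite /projp0 /lc p0E.
by case: eqP => [->|_]; rewrite ?h //; ring.
Qed.

Lemma projp0_at x j : j != o6 5 -> projp0 x j = x j.
Proof. by rewrite /projp0 => /negbTE ->. Qed.

Lemma lf_projp0 l x : lf l (projp0 x) = lf (projp0 l) x.
Proof. by apply: eq_bigr => j _; rewrite /projp0; case: ifP => _; ring. Qed.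

Lemma gcone_projp0 (F : {mpoly k[4]}) x : gcone F (projp0 x) = gcone F x.
Proof.
rewrite /gcone projp0_at ?eq_o6 //; congr (_ - F.@[_]); apply: functional_extensionality => j.
rewrite /restr4 projp0_at // -val_eqE o6K //=; apply/eqP => h.
by have := ltn_ord j; rewrite h.
Qed.

End Projection.

Section Plane.
Variable k : closedFieldType.
(* [j1] is the index among 1, 2 other than [i]: the plane of C_i has
   coordinates x_j1, x3, x4, and [cross]/[det] are the usual vector and
   triple products in these coordinates. *)
Variables i j1 : 'I_6.
Hypothesis hij : (i = o6 1 /\ j1 = o6 2) \/ (i = o6 2 /\ j1 = o6 1).
Implicit Types (a b c d g x y l p q w : vec k) (u v s : k).

Definition planar x := [/\ x (o6 0) = 0, x i = 0 & x (o6 5) = 0].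

Definition cross a b : vec k := fun j =>
  if j == j1 then a (o6 3) * b (o6 4) - a (o6 4) * b (o6 3)
  else if j == o6 3 then a (o6 4) * b j1 - a j1 * b (o6 4)
  else if j == o6 4 then a j1 * b (o6 3) - a (o6 3) * b j1
  else 0.

Definition det a b c := lf (cross a b) c.

Lemma planar_ext x y : planar x -> planar y ->
  x j1 = y j1 -> x (o6 3) = y (o6 3) -> x (o6 4) = y (o6 4) -> x = y.
Proof.
move=> [x0 xi x5] [y0 yi y5] e1 e3 e4; apply: vec_ext => j.
case: hij => -[ei ej]; rewrite ?ei ?ej in xi yi e1;
  by case: (ord6_cases j) => [|[|[|[|[|]]]]] ->; rewrite ?x0 ?y0 ?xi ?yi ?x5 ?y5.
Qed.

Lemma lf_planar l x : planar x ->
  lf l x = l j1 * x j1 + l (o6 3) * x (o6 3) + l (o6 4) * x (o6 4).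
Proof.
move=> [x0 xi x5]; rewrite /lf sum6 x0 x5.
by case: hij => -[ei ej]; rewrite ?ei ?ej in xi *; rewrite xi; ring.
Qed.

Lemma planar_lc u a v b : planar a -> planar b -> planar (lc u a v b).
Proof.
by move=> [a0 ai a5] [b0 bi b5]; rewrite /planar /lc a0 ai a5 b0 bi b5; split; ring.
Qed.

Lemma planar_unitv r : r != o6 0 -> r != i -> r != o6 5 -> planar (unitv r).
Proof.
move=> /negbTE h0 /negbTE hi /negbTE h5.
by rewrite /planar /unitv eq_sym h0 eq_sym hi eq_sym h5.
Qed.

Lemma cross_planar a b : planar (cross a b).
Proof. by rewrite /planar /cross; case: hij => -[-> ->]; rewrite !eq_o6. Qed.

Lemma lf_cross a b x : lf (cross a b) x =
  x j1 * (a (o6 3) * b (o6 4) - a (o6 4) * b (o6 3))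
  + x (o6 3) * (a (o6 4) * b j1 - a j1 * b (o6 4))
  + x (o6 4) * (a j1 * b (o6 3) - a (o6 3) * b j1).
Proof. by rewrite /lf sum6 /cross; case: hij => -[_ ->]; rewrite !eq_o6 //=; ring. Qed.

Lemma detC a b c : det a b c = det b c a.
Proof. by rewrite /det !lf_cross; ring. Qed.

Lemma det_lc a b u x v y : det a b (lc u x v y) = u * det a b x + v * det a b y.
Proof. exact: lf_lc. Qed.

Lemma det_dup13 a b : det a b a = 0.
Proof. by rewrite /det lf_cross; ring. Qed.

Lemma det_dup23 a b : det a b b = 0.
Proof. by rewrite /det lf_cross; ring. Qed.

Lemma cramer a b c x : planar a -> planar b -> planar c -> planar x ->
  forall j, det a b c * x j = det x b c * a j + det a x c * b j + det a b x * c j.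
Proof.
move=> [a0 ai a5] [b0 bi b5] [c0 ci c5] [x0 xi x5] j; rewrite /det !lf_cross.
case: hij => -[ei ej]; rewrite ?ei ?ej in ai bi ci xi *;
  case: (ord6_cases j) => [|[|[|[|[|]]]]] ->;
  rewrite ?(a0, b0, c0, x0, ai, bi, ci, xi, a5, b5, c5, x5); ring.
Qed.

Lemma lf_cramer g a b c x : planar a -> planar b -> planar c -> planar x ->
  det a b c * lf g x = det x b c * lf g a + det a x c * lf g b + det a b x * lf g c.
Proof.
move=> pa pb pc px; rewrite /lf !mulr_sumr -!big_split; apply: eq_bigr => j _ /=.
by rewrite mulrCA (cramer pa pb pc px); ring.
Qed.

Lemma cross_cross a b c : planar a -> planar b -> planar c ->
  cross (cross a b) c = lc (lf a c) b (- lf b c) a.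
Proof.
move=> pa pb pc; apply: planar_ext; [exact: cross_planar | exact: planar_lc | ..];
  rewrite /lc !lf_planar // /cross; case: hij => -[_ ->]; rewrite !eq_o6 //=; ring.
Qed.

Lemma exists_det_neq0 a b : planar a -> planar b -> indep2 a b ->
  exists c, planar c /\ det a b c != 0.
Proof.
move=> pa pb hab; apply: NNPP => hn.
have cross0 : cross a b = (fun=> 0).
  apply: vec_ext => j.
  have [->|nj0] := eqVneq j (o6 0); first by case: (cross_planar a b).
  have [->|nji] := eqVneq j i; first by case: (cross_planar a b).
  have [->|nj5] := eqVneq j (o6 5); first by case: (cross_planar a b).
  apply/eqP; rewrite -[cross a b j]lf_unitv; apply/negPn/negP => h.
  by apply: hn; exists (unitv j); split; [exact: planar_unitv | exact: h].
have [m am] : nonzero a.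
  apply: NNPP => na; have [] := hab 1 0 => [j|/eqP]; last by rewrite oner_eq0.
  by rewrite mul1r mul0r addr0; apply: NNPP => /eqP ?; apply: na; exists j.
have pm : planar (unitv m).
  case: pa => a0 ai a5; apply: planar_unitv;
    by apply: contra am => /eqP->; rewrite ?a0 ?ai ?a5.
(* (a x b) x e_m = a_m b - b_m a is then a linear dependence. *)
have := cross_cross pa pb pm; rewrite cross0 !lf_unitv => h.
have [_ /eqP] : - b m = 0 /\ a m = 0.
  apply: hab => j; have := congr1 (fun f => f j) h.
  rewrite /cross !mul0r subrr !if_same /lc => /esym e.
  by transitivity (a m * b j + - b m * a j); [ring | exact: e].
by rewrite (negbTE am).
Qed.

Lemma dual_basis a b : planar a -> planar b -> indep2 a b ->
  exists U V, [/\ planar U, planar V &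
                  [/\ lf U a = 1, lf U b = 0, lf V a = 0 & lf V b = 1]].
Proof.
move=> pa pb hab; have [c [pc hD]] := exists_det_neq0 pa pb hab.
have planarZ s y : planar y -> planar (fun j => s * y j).
  by case=> y0 yi y5; rewrite /planar y0 yi y5 mulr0.
exists (fun j => (det a b c)^-1 * cross b c j), (fun j => (det a b c)^-1 * cross c a j).
split; [exact/planarZ/cross_planar | exact/planarZ/cross_planar |].
have detE y z x : lf (cross y z) x = det y z x by [].
rewrite !lfZl !detE; split.
- by rewrite -[det b c a]detC mulVf.
- by rewrite [det b c b]detC det_dup23 mulr0.
- by rewrite det_dup23 mulr0.
- by rewrite [det c a b]detC mulVf.
Qed.

Lemma kernel_span a b g x : planar a -> planar b -> indep2 a b ->
  lf g a = 0 -> lf g b = 0 -> (exists c, planar c /\ lf g c != 0) ->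
  planar x -> lf g x = 0 -> span2 a b x.
Proof.
move=> pa pb hab ga gb [c0 [pc0 gc0]] px gx.
have [c [pc hD]] := exists_det_neq0 pa pb hab.
have gc : lf g c != 0.
  apply: contra (mulf_neq0 hD gc0) => /eqP gc.
  by rewrite (lf_cramer g pa pb pc pc0) ga gb gc !mulr0 !addr0.
have dx : det a b x = 0.
  have := lf_cramer g pa pb pc px; rewrite gx ga gb !mulr0 !add0r => /esym/eqP.
  by rewrite mulf_eq0 (negbTE gc) orbF => /eqP.
exists (det x b c / det a b c), (det a x c / det a b c) => j.
by apply: (mulfI hD); rewrite (cramer pa pb pc px) dx; field.
Qed.

Lemma kernel_indep p g : planar p -> nonzero p -> lf g p = 0 ->
  (exists c, planar c /\ lf g c != 0) ->
  exists w, [/\ planar w, lf g w = 0 & indep2 p w].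
Proof.
move=> pp [m pm] gp [c [pc gc]].
have eq0_at_m u v y : (forall j, lc u p v y j = 0) -> v = 0 -> u = 0.
  move=> h v0; have /eqP := h m; rewrite /lc v0 mul0r addr0 mulf_eq0 (negbTE pm) orbF.
  by move/eqP.
have hpc : indep2 p c.
  move=> u v h; have := lf_lc_eq0 g h; rewrite gp mulr0 add0r => /eqP.
  rewrite mulf_eq0 (negbTE gc) orbF => /eqP v0.
  by split; first exact: (eq0_at_m _ _ _ h).
have [d [pd hD]] := exists_det_neq0 pp pc hpc.
(* w := g(c) d - g(d) c lies in ker g, and det p c w = g(c) det p c d <> 0. *)
exists (lc (lf g c) d (- lf g d) c); split; first exact: planar_lc.
  by rewrite lf_lc; ring.
move=> u v h.
have : u * det p c p + v * det p c (lc (lf g c) d (- lf g d) c) = 0 := lf_lc_eq0 _ h.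
rewrite det_dup13 det_lc det_dup23 mulr0 add0r mulr0 addr0 => /eqP.
rewrite !mulf_eq0 (negbTE gc) (negbTE hD) !orbF => /eqP v0.
by split; first exact: (eq0_at_m _ _ _ h).
Qed.

End Plane.

Section ConeOverPlaneCubic.
Variable k : closedFieldType.
Variable F : {mpoly k[4]}.
Hypothesis hF : F \is 3.-homog.
Implicit Types (a b x y : vec k) (u v : k).

Definition o4 (n : nat) : 'I_4 := inord n.

Lemma sum4 (f : 'I_4 -> k) : \sum_j f j = f (o4 0) + f (o4 1) + f (o4 2) + f (o4 3).
Proof.
rewrite !big_ord_recl big_ord0 addr0 !addrA.
by congr (_ + _ + _ + _); congr f; apply/val_inj; rewrite /= inordK.
Qed.

Lemma restr4E x n : (n < 4)%N -> restr4 x (o4 n) = x (o6 n).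
Proof.
by move=> h; rewrite /restr4; congr x; apply/val_inj; rewrite /= !inordK // (ltn_trans h).
Qed.

Lemma grad_gE a n : (n < 4)%N -> grad_g F a (o6 n) = - (mderiv (o4 n) F).@[restr4 a].
Proof.
move=> h; have h6 : (n < 6)%N by apply: ltn_trans h _.
rewrite /grad_g o6K // h /o4; congr (- (mderiv _ F).@[_]).
by apply/val_inj; rewrite /= !inordK.
Qed.

Lemma lf_grad_g a b :
  lf (grad_g F a) b = 3%:R * a (o6 4) ^+ 2 * b (o6 4) - mdirderiv F (restr4 a) (restr4 b).
Proof.
rewrite /lf /mdirderiv sum6 sum4 !restr4E //.
rewrite !(@grad_gE a 0, @grad_gE a 1, @grad_gE a 2, @grad_gE a 3) //.
by rewrite /grad_g /o6 /= !inordK //=; ring.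
Qed.

Lemma gcone_lc u a v b : gcone F (lc u a v b) =
  u ^+ 3 * gcone F a + u ^+ 2 * v * lf (grad_g F a) b
  + u * v ^+ 2 * lf (grad_g F b) a + v ^+ 3 * gcone F b.
Proof.
rewrite /gcone !lf_grad_g.
have -> : restr4 (lc u a v b) = (fun j => u * restr4 a j + v * restr4 b j) by [].
by rewrite meval_homog3_lin // /lc; ring.
Qed.

Lemma lf_grad_g_self a : lf (grad_g F a) a = 3%:R * gcone F a.
Proof. by rewrite lf_grad_g mdirderiv_homog3_self // /gcone; ring. Qed.

End ConeOverPlaneCubic.

Section Residual.
Variable k : closedFieldType.
Hypothesis hchar : [pchar k] =i pred0.
Variable F : {mpoly k[4]}.
Hypothesis hF : F \is 3.-homog.
Variables i j1 : 'I_6.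
Hypothesis hij : (i = o6 1 /\ j1 = o6 2) \/ (i = o6 2 /\ j1 = o6 1).
Hypothesis hdr : exists l1 l2 m1 m2 : k, l1 * m2 - l2 * m1 != 0 /\
  forall x : vec k, x (o6 0) = 0 -> x i = 0 ->
    F.@[restr4 x] = (l1 * x j1 + l2 * x (o6 3)) ^+ 2 * (m1 * x j1 + m2 * x (o6 3)).
Variable t : k.
Implicit Types (a b x y l m : vec k) (u v s : k).
Local Notation planar := (planar i).

Lemma Phi_gcone x : x (o6 0) = 0 -> x i = 0 -> Phi F t x = gcone F x.
Proof.
move=> x0 xi; rewrite /Phi /gcone x0.
by case: hij => -[ei _]; rewrite ei in xi; rewrite xi; ring.
Qed.

Lemma gcone_line_neq0 a b : planar a -> planar b -> indep2 a b ->
  ~ (forall u v, gcone F (lc u a v b) = 0).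
Proof.
move=> pa pb hab hz; have [l1 [l2 [m1 [m2 [hD hf]]]]] := hdr.
have gconeE y : planar y -> gcone F y =
    y (o6 4) ^+ 3 - (l1 * y j1 + l2 * y (o6 3)) ^+ 2 * (m1 * y j1 + m2 * y (o6 3)).
  by case=> y0 yi _; rewrite /gcone hf.
(* Either the line meets x_j1 = x3 = 0, where the cubic forces x4 = 0 too,
   or l and m restrict to independent forms on it and x4^3 = l^2 m fails. *)
have [m0|mn] := eqVneq (a j1 * b (o6 3) - b j1 * a (o6 3)) 0.
  have [u [v [uv0 e1 e3]]] := common_zero2 m0.
  have puv := planar_lc u v pa pb.
  have lj1 : lc u a v b j1 = 0 by rewrite /lc -e1; ring.
  have l3 : lc u a v b (o6 3) = 0 by rewrite /lc -e3; ring.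
  have e4 : lc u a v b (o6 4) = 0.
    have /eqP : lc u a v b (o6 4) ^+ 3 = 0 by rewrite -(hz u v) gconeE // lj1 l3; ring.
    by rewrite expf_eq0 => /eqP.
  have pz : planar (fun _ : 'I_6 => 0 : k) by [].
  have z : lc u a v b = fun=> 0 := planar_ext hij puv pz lj1 l3 e4.
  have [u0 v0] := hab u v (fun j => congr1 (fun f => f j) z).
  by case: uv0; rewrite ?u0 ?v0 eqxx.
apply: (@double_root_form_not_cube _
   (l1 * a j1 + l2 * a (o6 3)) (l1 * b j1 + l2 * b (o6 3))
   (m1 * a j1 + m2 * a (o6 3)) (m1 * b j1 + m2 * b (o6 3)) (a (o6 4)) (b (o6 4))).
  rewrite (_ : _ - _ = (l1 * m2 - l2 * m1) * (a j1 * b (o6 3) - b j1 * a (o6 3))).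
    by rewrite mulf_neq0.
  by ring.
move=> u v; apply/eqP; rewrite -subr_eq0; apply/eqP.
have := hz u v; rewrite gconeE; last exact: planar_lc.
by rewrite /lc => <-; ring.
Qed.

(* A normal form for the line L = lineL p1 p2: (p1, b) is a basis of L with
   dual coordinates (U, V), in which the cone cubic factors as below; [w] is
   the tangent case p1 = p2, where p2 is a root of V rather than of U. *)
Record frame (p1 p2 b U V : vec k) (w : bool) (al be : k) : Prop := Frame {
  frame_p1 : planar p1;
  frame_b : planar b;
  frame_U : planar U;
  frame_V : planar V;
  frame_dual : [/\ lf U p1 = 1, lf U b = 0, lf V p1 = 0 & lf V b = 1];
  frame_coords : forall x, lineL F i p1 p2 x -> x = lc (lf U x) p1 (lf V x) b;
  frame_span : forall u v, lineL F i p1 p2 (lc u p1 v b);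
  frame_proj : forall x, planeP F i p1 p2 x -> lineL F i p1 p2 (projp0 x);
  frame_cone : forall s y, lineL F i p1 p2 y -> planeP F i p1 p2 (lc s (p0 k) 1 y);
  frame_gcone : forall u v,
    gcone F (lc u p1 v b) = v * (if w then v else u) * (al * u + be * v);
  frame_nondeg : al != 0 \/ be != 0;
  frame_p2 : lineL F i p1 p2 p2;
  frame_p2_neq0 : nonzero p2;
  frame_p2_root : lf (if w then V else U) p2 = 0 }.

Section Frame.
Variables (p1 p2 b U V : vec k) (w : bool) (al be : k).
Hypothesis fr : frame p1 p2 b U V w al be.
Local Notation S := (lineL F i p1 p2).
Local Notation P := (planeP F i p1 p2).
Local Notation pt s u v := (lc s (p0 k) 1 (lc u p1 v b)).

Definition third_pt := lc be p1 (- al) b.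

Lemma line_planar x : S x -> planar x.
Proof.
by move/(frame_coords fr) => ->; apply: planar_lc; [exact: (frame_p1 fr) | exact: (frame_b fr)].
Qed.

Lemma line_lc u x v y : S x -> S y -> S (lc u x v y).
Proof.
move=> /(frame_coords fr) hx /(frame_coords fr) hy.
have -> : lc u x v y = lc (u * lf U x + v * lf U y) p1 (u * lf V x + v * lf V y) b.
  by apply: vec_ext => j; rewrite /lc {1}hx {1}hy /lc; ring.
exact: (frame_span fr).
Qed.

Lemma line_span1 q x : S q -> span1 q x -> S x.
Proof.
move=> hq [c hc]; have -> : x = lc c q 0 q by apply: vec_ext => j; rewrite hc /lc; ring.
exact: line_lc.
Qed.

Lemma line_p1 : S p1.
Proof. by have := frame_span fr 1 0; congr S; apply: vec_ext => j; rewrite /lc; ring. Qed.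

Lemma line_b : S b.
Proof. by have := frame_span fr 0 1; congr S; apply: vec_ext => j; rewrite /lc; ring. Qed.

Lemma frame_indep : indep2 p1 b.
Proof.
have [U1 Ub V1 Vb] := frame_dual fr.
move=> u v h; have hU := lf_lc_eq0 U h; have hV := lf_lc_eq0 V h.
by rewrite U1 Ub V1 Vb in hU hV; split; [rewrite -hU | rewrite -hV]; ring.
Qed.

Lemma divcomp_line q l : S q -> lf l q = 0 -> (exists x, S x /\ lf l x != 0) ->
  divcomp S (span1 q) l.
Proof.
move=> hq lq ex; split => // x hx; split; first exact: line_span1 hx.
case: hx => c hc; have -> : x = lc c q 0 q by apply: vec_ext => j; rewrite hc /lc; ring.
by rewrite lf_lc lq; ring.
Qed.

Lemma frame_third_point : third_point F i p1 p2 third_pt.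
Proof.
have [U1 Ub V1 Vb] := frame_dual fr.
split.
  apply: NNPP => nz; have [b0 /eqP] : be = 0 /\ - al = 0.
    by apply: frame_indep => j; apply: NNPP => /eqP hj; apply: nz; exists j.
  by rewrite oppr_eq0 => /eqP a0; case: (frame_nondeg fr); rewrite ?a0 ?b0 eqxx.
exists V, (if w then V else U), (lc al U be V); split.
- move=> x /(frame_coords fr) hx; rewrite {1}hx (frame_gcone fr) lf_lcl.
  by case: (w).
- apply: divcomp_line; [exact: line_p1 | exact: V1 |].
  by exists b; rewrite Vb oner_neq0; split; first exact: line_b.
- apply: divcomp_line; [exact: (frame_p2 fr) | exact: (frame_p2_root fr) |].
  by case: (w); [exists b; rewrite Vb | exists p1; rewrite U1]; rewrite oner_neq0; split => //;
    [exact: line_b | exact: line_p1].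
- apply: divcomp_line; first by apply: (frame_span fr).
    by rewrite lf_lcl /third_pt !lf_lc U1 Ub V1 Vb; ring.
  case: (frame_nondeg fr) => h.
    by exists p1; split; [exact: line_p1 | rewrite lf_lcl U1 V1 mulr1 mulr0 addr0].
  by exists b; split; [exact: line_b | rewrite lf_lcl Ub Vb mulr1 mulr0 add0r].
Qed.

Lemma Phi_plane x : P x -> Phi F t x = gcone F (projp0 x).
Proof.
move=> /(frame_proj fr) /line_planar [h0 hi _]; rewrite gcone_projp0 Phi_gcone //.
  by rewrite -h0 projp0_at ?eq_o6.
by rewrite -hi projp0_at //; case: hij => -[-> _]; rewrite eq_o6.
Qed.

Lemma divcomp_cone q l : divcomp S (span1 q) l -> divcomp P (span2 (p0 k) q) (projp0 l).
Proof.
case=> h1 [y [hy ly]].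
have [Sq lq] : S q /\ lf l q = 0 by apply: h1; exists 1 => j; ring.
have [_ _ q5] := line_planar Sq.
split.
  move=> x [s0 [u hx]].
  have ex : x = lc s0 (p0 k) 1 (lc u q 0 q) by apply: vec_ext => j; rewrite hx /lc; ring.
  split; first by rewrite ex; apply: (frame_cone fr); apply: line_lc.
  rewrite -lf_projp0 ex projp0_cone; last by rewrite /lc q5; ring.
  by rewrite lf_lc lq; ring.
exists y; split.
  by have := frame_cone fr 0 hy; congr P; apply: vec_ext => j; rewrite /lc; ring.
have [_ _ y5] := line_planar hy.
by rewrite -lf_projp0 projp0_id.
Qed.

Lemma frame_residual_cone p3 : third_point F i p1 p2 p3 ->
  residual_line F t i p1 p2 (p0 k) p3 /\ Cpt F i p3.
Proof.
case=> nz3 [l1 [l2 [l3 [hfac d1 d2 d3]]]].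
have [S3 l3p3] : S p3 /\ lf l3 p3 = 0 by case: d3 => h _; apply: h; exists 1 => j; ring.
have [h0 hi h5] := line_planar S3.
split; last by split => //; rewrite hfac // l3p3 mulr0.
split.
  move=> a0 b0 hj; have e5 := hj (o6 5); rewrite p0E eqxx h5 mulr1 mulr0 addr0 in e5.
  split => //; case: nz3 => j nj; have := hj j; rewrite e5 mul0r add0r => /eqP.
  by rewrite mulf_eq0 (negbTE nj) orbF => /eqP.
exists (projp0 l1), (projp0 l2), (projp0 l3); split; try exact: divcomp_cone.
by move=> x hx; rewrite Phi_plane // hfac ?lf_projp0 //; apply: (frame_proj fr).
Qed.

Lemma plane_coords x : P x -> x = lc (x (o6 5)) (p0 k) 1 (lc (lf U x) p1 (lf V x) b).
Proof.
move=> hx; rewrite {1}(p0_decomp x); congr lc.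
have [_ _ U5] := frame_U fr; have [_ _ V5] := frame_V fr.
have hU : lf U (projp0 x) = lf U x by rewrite lf_projp0 projp0_id.
have hV : lf V (projp0 x) = lf V x by rewrite lf_projp0 projp0_id.
rewrite -hU -hV; exact/(frame_coords fr)/(frame_proj fr).
Qed.

Lemma plane_pt s u v : P (pt s u v).
Proof. exact/(frame_cone fr)/(frame_span fr). Qed.

Lemma lf_plane_pt m s u v : lf m (pt s u v) = s * m (o6 5) + u * lf m p1 + v * lf m b.
Proof. by rewrite !lf_lc lf_p0; ring. Qed.

Lemma Phi_plane_pt s u v : Phi F t (pt s u v) = v * (if w then v else u) * (al * u + be * v).
Proof.
have [[_ _ p15] [_ _ b5]] := (frame_p1 fr, frame_b fr).
have y5 : lc u p1 v b (o6 5) = 0 by rewrite /lc p15 b5; ring.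
by rewrite (Phi_plane (plane_pt s u v)) (projp0_cone _ y5) (frame_gcone fr).
Qed.

Lemma factor_p0p1 m : divcomp P (span2 (p0 k) p1) m ->
  exists mu : k, mu != 0 /\ forall s u v, lf m (pt s u v) = v * mu.
Proof.
case=> d [y [Py ny]].
have [[_ m0] [_ m1]] : (P (p0 k) /\ lf m (p0 k) = 0) /\ (P p1 /\ lf m p1 = 0).
  by split; apply: d; [exists 1, 0 | exists 0, 1] => j; ring.
rewrite lf_p0 in m0.
have mpt s u v : lf m (pt s u v) = v * lf m b by rewrite lf_plane_pt m0 m1; ring.
exists (lf m b); split => //.
by apply: contra ny => /eqP mb; rewrite (plane_coords Py) mpt mb mulr0.
Qed.

Lemma factor_p0p2 m : divcomp P (span2 (p0 k) p2) m ->
  exists mu : k, mu != 0 /\ forall s u v, lf m (pt s u v) = (if w then v else u) * mu.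
Proof.
case=> d [y [Py ny]].
have [[_ m0] [_ m2]] : (P (p0 k) /\ lf m (p0 k) = 0) /\ (P p2 /\ lf m p2 = 0).
  by split; apply: d; [exists 1, 0 | exists 0, 1] => j; ring.
rewrite lf_p0 in m0.
have hp2 := frame_coords fr (frame_p2 fr).
have [j p2j] := frame_p2_neq0 fr.
have r0 := frame_p2_root fr.
case hw : w in r0 *; rewrite r0 in hp2; rewrite hp2 lf_lc in m2.
- have Up2 : lf U p2 != 0 by apply: contra p2j => /eqP U0; rewrite hp2 /lc U0 !mul0r addr0.
  move/eqP: m2; rewrite mul0r addr0 mulf_eq0 (negbTE Up2) /= => /eqP m1.
  have mpt s u v : lf m (pt s u v) = v * lf m b by rewrite lf_plane_pt m0 m1; ring.
  exists (lf m b); split => //.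
  by apply: contra ny => /eqP mb; rewrite (plane_coords Py) mpt mb mulr0.
- have Vp2 : lf V p2 != 0 by apply: contra p2j => /eqP V0; rewrite hp2 /lc V0 !mul0r addr0.
  move/eqP: m2; rewrite mul0r add0r mulf_eq0 (negbTE Vp2) /= => /eqP mb.
  have mpt s u v : lf m (pt s u v) = u * lf m p1 by rewrite lf_plane_pt m0 mb; ring.
  exists (lf m p1); split => //.
  by apply: contra ny => /eqP m1; rewrite (plane_coords Py) mpt m1 mulr0.
Qed.

Lemma frame_third_factor m1 m2 m3 :
  (forall x, P x -> Phi F t x = lf m1 x * lf m2 x * lf m3 x) ->
  divcomp P (span2 (p0 k) p1) m1 -> divcomp P (span2 (p0 k) p2) m2 ->
  exists mu : k, mu != 0 /\ forall x, P x -> mu * lf m3 x = al * lf U x + be * lf V x.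
Proof.
move=> hfac /factor_p0p1 [mu1 [h1 e1]] /factor_p0p2 [mu2 [h2 e2]].
have two : 2%:R != 0 :> k by have /pcharf0P -> := hchar.
have [g0 ga gb] : [/\ mu1 * mu2 * m3 (o6 5) = 0, mu1 * mu2 * lf m3 p1 = al
                     & mu1 * mu2 * lf m3 b = be].
  apply: (@cancel_quadratic_factor _ w _ _ _ _ _ two) => s u v.
  rewrite -(Phi_plane_pt s) (hfac _ (plane_pt s u v)) e1 e2 lf_plane_pt.
  by move: (if w then v else u) => c; ring.
exists (mu1 * mu2); split; first exact: mulf_neq0.
move=> x hx; rewrite {1}(plane_coords hx) lf_plane_pt.
transitivity (x (o6 5) * (mu1 * mu2 * m3 (o6 5)) + lf U x * (mu1 * mu2 * lf m3 p1)
  + lf V x * (mu1 * mu2 * lf m3 b)); first by ring.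
by rewrite g0 ga gb; ring.
Qed.

Lemma frame_kernel x : P x -> al * lf U x + be * lf V x = 0 ->
  exists rho : k, forall j, x j = x (o6 5) * p0 k j + rho * third_pt j.
Proof.
move=> hx he; have hc := plane_coords hx.
have [a0|an] := eqVneq al 0.
  have bn : be != 0 by case: (frame_nondeg fr); rewrite ?a0 ?eqxx.
  rewrite a0 mul0r add0r in he; move/eqP: he; rewrite mulf_eq0 (negbTE bn) /= => /eqP v0.
  by exists (lf U x / be) => j; rewrite {1}hc /third_pt /lc v0 a0; field.
exists (- lf V x / al) => j.
have eU : lf U x = - (be * lf V x) / al.
  apply: (mulfI an); transitivity (al * lf U x + be * lf V x - be * lf V x); first by ring.
  by rewrite he; field.
by rewrite {1}hc /third_pt /lc eU; field.
Qed.

Lemma residual_factor_kernel m1 m2 m3 z :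
  (forall x, P x -> Phi F t x = lf m1 x * lf m2 x * lf m3 x) ->
  divcomp P (span2 (p0 k) p1) m1 -> divcomp P (span2 (p0 k) p2) m2 ->
  P z -> lf m3 z = 0 -> exists rho, forall j, z j = z (o6 5) * p0 k j + rho * third_pt j.
Proof.
move=> hfac d1 d2 hz mz; have [mu [_ hm]] := frame_third_factor hfac d1 d2.
by apply: frame_kernel => //; rewrite -hm // mz mulr0.
Qed.

Lemma frame_residual_unique q q' p3 : residual_line F t i p1 p2 q q' ->
  third_point F i p1 p2 p3 -> forall x, span2 q q' x <-> span2 (p0 k) p3 x.
Proof.
case=> hqq [m1 [m2 [m3 [hfac d1 d2 d3]]]] h3.
have [[_ [n1 [n2 [n3 [hfac' e1 e2 e3]]]]] [nz3 _ _ p35 _]] := frame_residual_cone h3.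
have [P3 n3p3] : P p3 /\ lf n3 p3 = 0 by case: e3 => h _; apply: h; exists 0, 1 => j; ring.
have [r3 hr3] := residual_factor_kernel hfac' e1 e2 P3 n3p3; rewrite p35 in hr3.
have r3n : r3 != 0.
  apply/eqP => r0; case: nz3 => j; rewrite hr3 r0; apply/negP; rewrite negbK; apply/eqP; ring.
have [[Pq mq] [Pq' mq']] : (P q /\ lf m3 q = 0) /\ (P q' /\ lf m3 q' = 0).
  by case: d3 => h _; split; apply: h; [exists 1, 0 | exists 0, 1] => j; ring.
have [rq hrq] := residual_factor_kernel hfac d1 d2 Pq mq.
have [rq' hrq'] := residual_factor_kernel hfac d1 d2 Pq' mq'.
apply: (span2_eq (A1 := q (o6 5)) (B1 := rq / r3) (A2 := q' (o6 5)) (B2 := rq' / r3) hqq).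
- by move=> j; rewrite {1}hrq hr3; field.
- by move=> j; rewrite {1}hrq' hr3; field.
Qed.

End Frame.

Lemma Cpt_planar p : Cpt F i p -> planar p.
Proof. by case=> _ h0 hi h5 _; split. Qed.

Lemma grad_g5 a : grad_g F a (o6 5) = 0.
Proof. by rewrite /grad_g o6K. Qed.

Lemma lineL_distinct p1 p2 x : ~ proj_eq p1 p2 -> lineL F i p1 p2 x <-> span2 p1 p2 x.
Proof. by move=> np; split; [case=> _; apply | move=> h; split => // /np]. Qed.

Lemma planeP_distinct p1 p2 x : ~ proj_eq p1 p2 ->
  planeP F i p1 p2 x <-> span3 (p0 k) p1 p2 x.
Proof. by move=> np; split; [case=> _; apply | move=> h; split => // /np]. Qed.

Lemma lineL_tangent p1 p2 x : proj_eq p1 p2 ->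
  lineL F i p1 p2 x <-> planar x /\ lf (grad_g F p1) x = 0.
Proof.
move=> pe; split; first by case=> /(_ pe) [x0 xi x5 gx] _; split.
by case=> -[x0 xi x5] gx; split => [_|/(_ pe)//]; split.
Qed.

Lemma planeP_tangent p1 p2 x : proj_eq p1 p2 ->
  planeP F i p1 p2 x <-> [/\ x (o6 0) = 0, x i = 0 & lf (grad_g F p1) x = 0].
Proof. by move=> pe; split; [case=> /(_ pe) | move=> h; split => // /(_ pe)]. Qed.

Lemma grad_g_planar_neq0 p1 :
  (exists j : 'I_6, [/\ j != o6 0, j != i & grad_g F p1 j != 0]) ->
  exists c, planar c /\ lf (grad_g F p1) c != 0.
Proof.
case=> j [j0 ji gj]; exists (unitv j); rewrite lf_unitv; split => //.
by apply: planar_unitv => //; apply: contra gj => /eqP ->; rewrite grad_g5.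
Qed.

Lemma frame_of_distinct p1 p2 : Cpt F i p1 -> Cpt F i p2 -> ~ proj_eq p1 p2 ->
  exists U V al be, frame p1 p2 p2 U V false al be.
Proof.
move=> c1 c2 np; have pp1 := Cpt_planar c1; have pp2 := Cpt_planar c2.
have hind : indep2 p1 p2 by apply: indep2_of_not_proj_eq => //; [case: c1 | case: c2].
have [U [V [pU pV hUV]]] := dual_basis hij pp1 pp2 hind.
have Sx x := lineL_distinct x np; have Px x := planeP_distinct x np.
have [g1 g2] : gcone F p1 = 0 /\ gcone F p2 = 0 by case: c1; case: c2.
exists U, V, (lf (grad_g F p1) p2), (lf (grad_g F p2) p1); split => //.
- by move=> x /Sx [s [u hx]]; apply: dual_coords hx.
- by move=> u v; apply/Sx; exists u, v.
- move=> x /Px [s [u [v hx]]]; apply/Sx; exists u, v => j.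
  rewrite /projp0 hx p0E; case: eqP => [->|_]; last by ring.
  by case: pp1 => _ _ ->; case: pp2 => _ _ ->; ring.
- by move=> s y /Sx [u [v hy]]; apply/Px; exists s, u, v => j; rewrite /lc hy; ring.
- by move=> u v; rewrite (gcone_lc hF) g1 g2 /=; ring.
- have [a0|] := eqVneq (lf (grad_g F p1) p2) 0; last by left.
  have [b0|] := eqVneq (lf (grad_g F p2) p1) 0; last by right.
  exfalso; apply: (gcone_line_neq0 pp1 pp2 hind) => u v.
  by rewrite (gcone_lc hF) g1 g2 a0 b0; ring.
- by apply/Sx; exists 0, 1 => j; ring.
- by case: c2.
- by case: hUV.
Qed.

Lemma frame_of_tangent p1 p2 : Cpt F i p1 -> Cpt F i p2 -> proj_eq p1 p2 ->
  (exists j : 'I_6, [/\ j != o6 0, j != i & grad_g F p1 j != 0]) ->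
  exists b U V al be, frame p1 p2 b U V true al be.
Proof.
move=> c1 c2 pe /grad_g_planar_neq0 ga_neq0; have pp1 := Cpt_planar c1.
have [nz1 g1] : nonzero p1 /\ gcone F p1 = 0 by case: c1.
have Sx x := lineL_tangent x pe; have Px x := planeP_tangent x pe.
set ga := grad_g F p1 in Sx Px ga_neq0 *.
have ga5 : ga (o6 5) = 0 := grad_g5 p1.
have gp1 : lf ga p1 = 0 by rewrite /ga (lf_grad_g_self hF) g1 mulr0.
have [w [pw gw iw]] := kernel_indep hij pp1 nz1 gp1 ga_neq0.
have [U [V [pU pV hUV]]] := dual_basis hij pp1 pw iw.
have [c [_ hc]] := pe.
have ep2 : p2 = lc c p1 0 p1 by apply: vec_ext => j; rewrite hc /lc; ring.
exists w, U, V, (lf (grad_g F w) p1), (gcone F w); split => //.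
- move=> x /Sx [px gx].
  have [s [u hx]] := kernel_span hij pp1 pw iw gp1 gw ga_neq0 px gx.
  exact: dual_coords hx.
- by move=> u v; apply/Sx; split; [exact: planar_lc | rewrite lf_lc gp1 gw; ring].
- move=> x /Px [x0 xi gx]; apply/Sx; split; last by rewrite lf_projp0 projp0_id.
  split; first by rewrite projp0_at ?eq_o6.
    by rewrite projp0_at //; case: hij => -[-> _]; rewrite eq_o6.
  by rewrite /projp0 eqxx.
- move=> s y /Sx [[y0 yi y5] gy]; apply/Px; split.
  + by rewrite /lc p0E eq_o6 //= y0; ring.
  + by rewrite /lc p0E yi; case: hij => -[-> _]; rewrite eq_o6 //=; ring.
  + by rewrite lf_lc lf_p0 ga5 gy; ring.
- by move=> u v; rewrite (gcone_lc hF) g1 -/ga gw /=; ring.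
- have [a0|] := eqVneq (lf (grad_g F w) p1) 0; last by left.
  have [b0|] := eqVneq (gcone F w) 0; last by right.
  exfalso; apply: (gcone_line_neq0 pp1 pw iw) => u v.
  by rewrite (gcone_lc hF) g1 -/ga gw a0 b0; ring.
- by apply/Sx; split; [exact: Cpt_planar c2 | rewrite ep2 lf_lc gp1; ring].
- by case: c2.
- by have [_ _ V1 _] := hUV; rewrite /= ep2 lf_lc V1; ring.
Qed.

Lemma residual_line_spec p1 p2 : Cpt F i p1 -> Cpt F i p2 ->
  (proj_eq p1 p2 -> exists j : 'I_6, [/\ j != o6 0, j != i & grad_g F p1 j != 0]) ->
  [/\ exists p3, third_point F i p1 p2 p3,
      forall p3, third_point F i p1 p2 p3 ->
        residual_line F t i p1 p2 (p0 k) p3 /\ Cpt F i p3,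
      forall q q' p3, residual_line F t i p1 p2 q q' -> third_point F i p1 p2 p3 ->
        forall x, span2 q q' x <-> span2 (p0 k) p3 x
    & forall q q', residual_line F t i p1 p2 q q' ->
        exists p, Cpt F i p /\ forall x, span2 q q' x <-> span2 (p0 k) p x].
Proof.
move=> c1 c2 hsm.
have [b [U [V [w [al [be fr]]]]]] : exists b U V w al be, frame p1 p2 b U V w al be.
  case: (classic (proj_eq p1 p2)) => pe.
    have [b [U [V [al [be fr]]]]] := frame_of_tangent c1 c2 pe (hsm pe).
    by exists b, U, V, true, al, be.
  have [U [V [al [be fr]]]] := frame_of_distinct c1 c2 pe.
  by exists p2, U, V, false, al, be.
have p3_third := frame_third_point fr.
split.
- by exists (third_pt p1 b al be).
- by move=> p3 /(frame_residual_cone fr).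
- by move=> q q' p3 hr /(frame_residual_unique fr hr).
- move=> q q' hr; exists (third_pt p1 b al be); split.
    exact: (frame_residual_cone fr p3_third).2.
  exact: (frame_residual_unique fr hr p3_third).
Qed.

End Residual.

Lemma plane_partner (i : 'I_6) : val i = 1%N \/ val i = 2%N ->
  exists j1, (i = o6 1 /\ j1 = o6 2) \/ (i = o6 2 /\ j1 = o6 1).
Proof.
case=> e; [exists (o6 2); left | exists (o6 1); right];
  by split => //; apply/val_inj; rewrite o6K.
Qed.

Lemma U0_plane_double_root (k : closedFieldType) (F : {mpoly k[4]}) (i j1 : 'I_6) :
  U0 F -> (i = o6 1 /\ j1 = o6 2) \/ (i = o6 2 /\ j1 = o6 1) ->
  exists l1 l2 m1 m2 : k, l1 * m2 - l2 * m1 != 0 /\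
    forall x : vec k, x (o6 0) = 0 -> x i = 0 ->
      F.@[restr4 x] = (l1 * x j1 + l2 * x (o6 3)) ^+ 2 * (m1 * x j1 + m2 * x (o6 3)).
Proof.
case=> _ _ _ d1 d2 hij.
have restr4_plane x : x (o6 0) = 0 -> restr4 x = vec4 0 (x (o6 1)) (x (o6 2)) (x (o6 3)).
  move=> x0; apply: functional_extensionality => -[[|[|[|[|?]]]] hj] //;
    by rewrite /restr4 /vec4 /= -?x0; congr x; apply/val_inj; rewrite /= ?o6K.
case: hij => -[-> ->]; [case: d1 | case: d2] => l1 [l2 [m1 [m2 [hD hf]]]];
  by exists l1, l2, m1, m2; split => // x x0 xi; rewrite restr4_plane // xi hf.
Qed.

Theorem lemma5p5 (k : closedFieldType) (hchar : [pchar k] =i pred0)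
  (F : {mpoly k[4]}) (t : k) (hU : U0 F)
  (i : 'I_6) (hi : val i = 1%N \/ val i = 2%N)
  (p1 p2 : vec k) (hp1 : Cpt F i p1) (hp2 : Cpt F i p2)
  (* when p1 = p2 the tangent plane of the cone along p0p1 must exist *)
  (hsm : proj_eq p1 p2 ->
         exists j : 'I_6, [/\ j != o6 0, j != i & grad_g F p1 j != 0]) :
  [/\ (* the third intersection point p3 exists *)
      exists p3, third_point F i p1 p2 p3,
      (* Y cap P = p0p1 + p0p2 + p0p3 *)
      forall p3, third_point F i p1 p2 p3 ->
        residual_line F t i p1 p2 (@p0 k) p3 /\ Cpt F i p3,
      (* any residual line l_{p1p2} equals p0p3 *)
      forall q q' p3, residual_line F t i p1 p2 q q' ->
        third_point F i p1 p2 p3 ->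
        forall x, span2 q q' x <-> span2 (@p0 k) p3 x
    & (* in particular l_{p1p2} lies in Gamma_i *)
      forall q q', residual_line F t i p1 p2 q q' ->
        exists p, Cpt F i p /\ forall x, span2 q q' x <-> span2 (@p0 k) p x].
Proof.
have [j1 hij] := plane_partner hi.
have [hF _ _ _ _] := hU.
exact: (residual_line_spec hchar hF hij (U0_plane_double_root hU hij) t hp1 hp2 hsm).
Qed.
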